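(* Let $\mathbf g=(g_1,\dots,g_s)$ and $J=\sqrt[\mathbb R]{\operatorname{supp}\mathcal Q(\mathbf g)}$. Let $\mathbf h=(h_1,\dots,h_m)$ be polynomials with $(\mathbf h)\subseteq J$ and $\deg h_i\le d$ for all $i$. Then there exists $k\ge d$ such that $$\mathcal L_k(\mathbf g)^{[d]}\subseteq\mathcal L_d(\mathbf g,\pm\mathbf h)\subseteq\mathcal L_d(\mathbf g).$$ In particular $\mathcal L_k(\mathbf g)^{[d]}\subseteq\mathcal L_d(\pm\mathbf h)$.
   Context: $\mathbb R[\mathbf X]=\mathbb R[X_1,\dots,X_n]$, $\mathbb R[\mathbf X]_t$ polynomials of degree $\le t$; $\Sigma^2$ sums of squares, $\Sigma^2_t=\Sigma^2\cap\mathbb R[\mathbf X]_t$. For a finite family $G$, $\mathcal Q_t(G)=\{s_0+\sum_{g\in G}s_gg:s_0\in\Sigma^2_t,s_g\in\Sigma^2,\deg s_g\le t-\deg g\}$, $\mathcal Q(G)=\bigcup_t\mathcal Q_t(G)$, $\mathcal L_t(G)=\{\sigma\in(\mathbb R[\mathbf X]_t)^*:\sigma\ge0\text{ on }\mathcal Q_t(G)\}$. $(\mathbf g,\pm\mathbf h)$ denotes the family $g_1,\dots,g_s,h_1,-h_1,\dots,h_m,-h_m$ and $\pm\mathbf h$ the family $h_1,-h_1,\dots,h_m,-h_m$. $\operatorname{supp}Q=Q\cap(-Q)$, $\sqrt[\mathbb R]{I}=\{p:\exists m', s\in\Sigma^2,\ p^{2m'}+s\in I\}$. For $\sigma\in(\mathbb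 R[\mathbf X]_k)^*$, $\sigma^{[d]}$ is its restriction to $\mathbb R[\mathbf X]_d$ and $B^{[d]}=\{\sigma^{[d]}:\sigma\in B\}$. *)

From HB Require Import structures.
From mathcomp Require Import all_boot all_order all_algebra.
From mathcomp Require Import reals.
From mathcomp Require Import mpoly.

Set Implicit Arguments.
Unset Strict Implicit.
Unset Printing Implicit Defensive.

Import Order.TTheory GRing.Theory Num.Theory.
Local Open Scope ring_scope.

Section Defs.
Variables (R : realType) (n : nat).
Notation poly := {mpoly R[n]}.

(* deg p <= t  (msize p = 1 + total degree, and msize 0 = 0, so 0 has every degree bound) *)
Definition deg_le (p : poly) (t : nat) : Prop := (msize p <= t.+1)%N.

Definition is_sos (p : poly) : Prop :=
  exists s : seq poly, p = \sum_(q <- s) q ^+ 2.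

Definition inQt (t : nat) (G : seq poly) (p : poly) : Prop :=
  exists (s0 : poly) (s : seq poly),
    [/\ is_sos s0, deg_le s0 t, size s = size G,
        forall i, (i < size G)%N ->
          is_sos s`_i /\ (s`_i = 0 \/ (msize s`_i + msize G`_i <= t.+2)%N)
      & p = s0 + \sum_(i < size G) s`_i * G`_i].
(* The degree condition deg s_g <= t - deg g is encoded as
   s_g = 0 or (deg s_g + deg g <= t), i.e. msize s_g + msize g <= t + 2. *)

Definition inQ (G : seq poly) (p : poly) : Prop := exists t, inQt t G p.

Definition suppQ (G : seq poly) (p : poly) : Prop := inQ G p /\ inQ G (- p).

Definition real_radical (I : poly -> Prop) (p : poly) : Prop :=
  exists (m' : nat) (s : poly), is_sos s /\ I (p ^+ (2 * m') + s).

Definition ideal_sub (h : seq poly) (J : poly -> Prop) : Prop :=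
  forall a : seq poly, J (\sum_(i < size h) a`_i * h`_i).

Definition pm (h : seq poly) : seq poly := flatten [seq [:: q; - q] | q <- h].

(* A functional sigma in (R[X]_t)^* is represented by a function
   poly -> R; only its values on polynomials of degree <= t matter.
   Restriction sigma^[d] is then the same function viewed on R[X]_d. *)
Definition lin_on (t : nat) (sigma : poly -> R) : Prop :=
  forall (a : R) (p q : poly), deg_le p t -> deg_le q t ->
    sigma (a *: p + q) = a * sigma p + sigma q.

Definition inL (t : nat) (G : seq poly) (sigma : poly -> R) : Prop :=
  lin_on t sigma /\ forall p, inQt t G p -> 0 <= sigma p.

End Defs.

From HB Require Import structures.
From mathcomp Require Import all_boot all_order all_algebra.
From mathcomp Require Import reals.
From mathcomp Require Import mpoly.
From mathcomp Require Import ring lra zify.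
Import Order.TTheory GRing.Theory Num.Theory.
Local Open Scope ring_scope.
Set Implicit Arguments.
Unset Strict Implicit.

(* The heart of the proof is an annihilation property: for k
   large, every sigma in L_k(g) satisfies sigma(u h_i) = 0 for all u of
   degree <= d + 1.  Indeed, h_i^(2m) + s lies in supp Q_t(g) for some t,
   some m and some sum of squares s, so sigma vanishes on it; positivity
   on sums of squares then gives sigma(h_i^(2m)) = 0, and the
   Cauchy-Schwarz inequality sigma(f g)^2 <= sigma(f^2) sigma(g^2) lets us
   descend to sigma(h_i u) = 0.
   The file first collects degree and linearity bookkeeping, then proves
   Cauchy-Schwarz (from a real quadratic-form lemma) and the annihilation
   property.  Next it shows that Q_t(g ++ ±h) is Q_t(g) plus weighted
   combinations of ±h, on which annihilating functionals vanish; this gives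
   L_k(g)^[d] ⊆ L_d(g, ±h).  The other inclusions come from
   Q_d(g), Q_d(±h) ⊆ Q_d(g, ±h), and a common k for all h_i is obtained
   by taking a maximum. *)

Lemma quadratic_form_zero (F : realFieldType) (b c : F) : 0 <= b ->
  (forall l : F, 0 <= l * c + l * c + l * l * b) -> c = 0.
Proof.
move=> b_ge0 nonneg.
have b1_neq0 : b + 1 != 0 by rewrite gt_eqF // ltr_wpDl.
pose l := - c / (b + 1).
have c_def : c = - (l * (b + 1)) by rewrite /l mulfVK // opprK.
have l0 : l = 0.
  have := nonneg l; rewrite c_def => H.
  have ll_le0 : l ^+ 2 <= 0 by nra.
  by apply/eqP; rewrite -sqrf_eq0 eq_le ll_le0 sqr_ge0.
by rewrite c_def l0 mul0r oppr0.
Qed.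

Section TruncatedModules.
Variables (R : realType) (n : nat).
Notation P := {mpoly R[n]}.
Implicit Types (p q f g u : P) (G H : seq P) (sigma : P -> R).

Lemma msizeM_le p q : (msize (p * q) <= (msize p + msize q).-1)%N.
Proof.
have [->|nzp] := eqVneq p 0; first by rewrite mul0r msize0.
have [->|nzq] := eqVneq q 0; first by rewrite mulr0 msize0.
by rewrite msizeM.
Qed.

Lemma deg_le_mono p a b : (a <= b)%N -> deg_le p a -> deg_le p b.
Proof. by rewrite /deg_le => ab; move/leq_trans; apply; rewrite ltnS. Qed.

Lemma deg_le0 a : deg_le (0 : P) a.
Proof. by rewrite /deg_le msize0. Qed.

Lemma deg_le1 a : deg_le (1 : P) a.
Proof. by rewrite /deg_le msize1. Qed.

Lemma deg_leN p a : deg_le (- p) a = deg_le p a.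
Proof. by rewrite /deg_le msizeN. Qed.

Lemma deg_leZ (c : R) p a : deg_le p a -> deg_le (c *: p) a.
Proof. exact: leq_trans (msizeZ_le _ _). Qed.

Lemma deg_leD p q a : deg_le p a -> deg_le q a -> deg_le (p + q) a.
Proof.
by move=> hp hq; apply: leq_trans (msizeD_le _ _) _; rewrite geq_max hp hq.
Qed.

Lemma deg_leM p q a b : deg_le p a -> deg_le q b -> deg_le (p * q) (a + b).
Proof.
rewrite /deg_le => hp hq; apply: leq_trans (msizeM_le p q) _.
by move: (leq_add hp hq); rewrite addSn addnS; case: (msize p + msize q)%N.
Qed.

Lemma deg_leX p a i : deg_le p a -> deg_le (p ^+ i) (i * a).
Proof.
move=> hp; elim: i => [|i IH]; first by rewrite expr0; apply: deg_le1.
by rewrite exprS mulSn; apply: deg_leM.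
Qed.

Lemma deg_le_sum (N : nat) (F : 'I_N -> P) a :
  (forall i, deg_le (F i) a) -> deg_le (\sum_(i < N) F i) a.
Proof.
move=> hF; apply: (big_ind (fun x => deg_le x a)) => //.
  exact: deg_le0.
by move=> x y; apply: deg_leD.
Qed.

Lemma weighted_term_deg s g t :
  s = 0 \/ (msize s + msize g <= t.+2)%N -> deg_le (s * g) t.
Proof.
case=> [->|hsg]; first by rewrite mul0r; apply: deg_le0.
by apply: leq_trans (msizeM_le _ _) _; move: hsg; case: (msize s + msize g)%N.
Qed.

Lemma lin_mono t t' sigma : (t <= t')%N -> lin_on t' sigma -> lin_on t sigma.
Proof. by move=> tt' L a p q hp hq; apply: L; apply: deg_le_mono tt' _. Qed.

Lemma lin0 t sigma : lin_on t sigma -> sigma 0 = 0.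
Proof.
move=> L; have := L 1 0 0 (deg_le0 _) (deg_le0 _).
rewrite scale1r addr0 mul1r; lra.
Qed.

Lemma linD t sigma p q : lin_on t sigma -> deg_le p t -> deg_le q t ->
  sigma (p + q) = sigma p + sigma q.
Proof. by move=> L hp hq; rewrite -[p]scale1r L // mul1r scale1r. Qed.

Lemma linZ t sigma c p : lin_on t sigma -> deg_le p t ->
  sigma (c *: p) = c * sigma p.
Proof.
by move=> L hp; rewrite -[c *: p]addr0 L ?(lin0 L) ?addr0 //; apply: deg_le0.
Qed.

Lemma linN t sigma p : lin_on t sigma -> deg_le p t -> sigma (- p) = - sigma p.
Proof. by move=> L hp; rewrite -scaleN1r (linZ _ L hp) mulN1r. Qed.

Lemma lin_sum t sigma (N : nat) (F : 'I_N -> P) : lin_on t sigma ->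
  (forall i, deg_le (F i) t) -> sigma (\sum_(i < N) F i) = \sum_(i < N) sigma (F i).
Proof.
move=> L; elim: N F => [|N IH] F hF; first by rewrite !big_ord0 (lin0 L).
rewrite !big_ord_recr /= (linD L) ?IH //.
exact: deg_le_sum.
Qed.

Lemma inQt_deg t G p : inQt t G p -> deg_le p t.
Proof.
case=> s0 [s [_ hs0 _ hs ->]]; apply: deg_leD => //.
by apply: deg_le_sum => i; apply: weighted_term_deg; case: (hs i (ltn_ord i)).
Qed.

Lemma inQt_mono t t' G p : (t <= t')%N -> inQt t G p -> inQt t' G p.
Proof.
move=> tt' [s0 [s [sos_s0 hs0 size_s hs ->]]]; exists s0, s; split => //.
  exact: deg_le_mono tt' hs0.
move=> i /hs [sos_i [s_i0|hi]]; split => //; [by left | right].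
by apply: leq_trans hi _; rewrite !ltnS.
Qed.

Lemma inL_mono t t' G sigma : (t <= t')%N -> inL t' G sigma -> inL t G sigma.
Proof.
move=> tt' [L pos]; split; first exact: lin_mono L.
by move=> p /(inQt_mono tt'); apply: pos.
Qed.

Lemma sos0 : is_sos (0 : P).
Proof. by exists [::]; rewrite big_nil. Qed.

Lemma sos_sq f : is_sos (f ^+ 2).
Proof. by exists [:: f]; rewrite big_seq1. Qed.

Lemma sos_nonneg t G sigma s : inL t G sigma -> is_sos s -> deg_le s t ->
  0 <= sigma s.
Proof.
move=> [_ pos] sos_s hs; apply: pos; exists s, (nseq (size G) 0); split => //.
- by rewrite size_nseq.
- by move=> i hi; rewrite nth_nseq hi; split; [exact: sos0 | left].
- by rewrite big1 ?addr0 // => i _; rewrite nth_nseq ltn_ord mul0r.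
Qed.

Lemma inL_supp_zero t G sigma q : inL t G sigma ->
  inQt t G q -> inQt t G (- q) -> sigma q = 0.
Proof.
move=> [L pos] hq hNq; have := pos _ hNq; have := pos _ hq.
rewrite (linN L (inQt_deg hq)); lra.
Qed.

(* Cauchy-Schwarz for a functional of L_t(G): sigma(f^2) = 0 forces
   sigma(f g) = 0 whenever f g still lies in the degree range. *)
Lemma cauchy_schwarz_zero t G sigma f g a : inL t G sigma ->
  deg_le f a -> deg_le g a -> (a + a <= t)%N ->
  sigma (f * f) = 0 -> sigma (f * g) = 0.
Proof.
move=> hL hf hg hat ff0; have L := hL.1.
have dt (x y : P) : deg_le x a -> deg_le y a -> deg_le (x * y) t.
  by move=> hx hy; apply: deg_le_mono hat (deg_leM hx hy).
apply: (quadratic_form_zero (b := sigma (g * g))).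
  by apply: sos_nonneg hL _ (dt _ _ hg hg); rewrite -expr2; apply: sos_sq.
move=> l; have dl : deg_le (f + l *: g) a by apply: deg_leD => //; apply: deg_leZ.
have := sos_nonneg hL (sos_sq (f + l *: g)) (dt _ _ dl dl).
have -> : (f + l *: g) ^+ 2 =
    f * f + (l *: (f * g) + l *: (f * g)) + (l * l) *: (g * g).
  by rewrite -!mul_mpolyC rmorphM /=; ring.
by rewrite !(linD L, linZ _ L) ?ff0 ?add0r //;
  repeat first [apply: deg_leD | apply: deg_leZ | apply: dt].
Qed.

Definition annihilates (d : nat) sigma p :=
  forall u, deg_le u d.+1 -> sigma (u * p) = 0.

(* Descending from sigma(p^(2m)) = 0 to sigma(p u) = 0 by repeated
   Cauchy-Schwarz: sigma(p^(j+2) p^(j+2)) = 0 gives sigma(p^(2(j+1))) = 0. *)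
Lemma pow_annihilates t G sigma p u e m : inL t G sigma ->
  deg_le p e -> deg_le u e -> (m.+2 * e + m.+2 * e <= t)%N ->
  sigma (p ^+ (2 * m)) = 0 -> sigma (p * u) = 0.
Proof.
move=> hL hp hu; elim: m => [|[|m] IH] ht pm0.
- have dpu : deg_le (p * u) (2 * e) by rewrite mul2n -addnn; apply: deg_leM.
  rewrite -[p * u]mul1r; apply: (cauchy_schwarz_zero hL (deg_le1 _) dpu) => //.
  by rewrite mulr1.
- apply: (cauchy_schwarz_zero hL hp hu); first lia.
  by rewrite -expr2.
- have dX i : (i <= m.+2)%N -> deg_le (p ^+ i) (m.+4 * e).
    by move=> im; apply: deg_le_mono _ (deg_leX i hp); rewrite leq_mul2r; lia.
  apply: IH; first nia.
  have -> : p ^+ (2 * m.+1) = p ^+ m.+2 * p ^+ m.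
    by rewrite -exprD; congr (_ ^+ _); lia.
  apply: (cauchy_schwarz_zero hL (dX _ _) (dX _ _) ht) => //; first lia.
  by rewrite -exprD addnn -mul2n.
Qed.

(* If p^(2m) + s lies in supp Q_t(G) with s a sum of squares, then sigma
   vanishes on it, hence on p^(2m), and Cauchy-Schwarz concludes. *)
Lemma real_radical_annihilated G p d : real_radical (suppQ G) p -> deg_le p d ->
  exists k, forall sigma, inL k G sigma -> annihilates d sigma p.
Proof.
case=> m [s [sos_s [[t1 hq1] [t2 hq2]]]] hp.
pose k := (t1 + t2 + m.+2 * d.+1 + m.+2 * d.+1)%N.
exists k => sigma hL u hu; have L := hL.1.
have hp1 : deg_le p d.+1 by apply: deg_le_mono hp.
have dq : deg_le (p ^+ (2 * m) + s) k.
  by apply: deg_le_mono (inQt_deg hq1); rewrite /k; lia.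
have dpow : deg_le (p ^+ (2 * m)) k.
  by apply: deg_le_mono _ (deg_leX _ hp1); rewrite /k; nia.
have ds : deg_le s k.
  by rewrite -[s](addKr (p ^+ (2 * m))) addrC; apply: deg_leD; rewrite ?deg_leN.
have q0 : sigma (p ^+ (2 * m) + s) = 0.
  by apply: (inL_supp_zero hL); [apply: inQt_mono _ hq1 | apply: inQt_mono _ hq2];
    rewrite /k; lia.
have pow_ge0 : 0 <= sigma (p ^+ (2 * m)).
  by apply: sos_nonneg hL _ dpow; rewrite mulnC exprM; apply: sos_sq.
have s_ge0 : 0 <= sigma s by apply: sos_nonneg hL sos_s ds.
have pow0 : sigma (p ^+ (2 * m)) = 0 by move: q0; rewrite (linD L dpow ds); lra.
by rewrite mulrC; apply: (pow_annihilates hL hp1 hu _ pow0); rewrite /k; lia.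
Qed.

Lemma weighted_sum_cat (s1 s2 G1 G2 : seq P) : size s1 = size G1 ->
  \sum_(i < size (G1 ++ G2)) (s1 ++ s2)`_i * (G1 ++ G2)`_i =
  \sum_(i < size G1) s1`_i * G1`_i + \sum_(i < size G2) s2`_i * G2`_i.
Proof.
move=> size_s1.
rewrite -(big_mkord xpredT (fun i => (s1 ++ s2)`_i * (G1 ++ G2)`_i)).
rewrite -(big_mkord xpredT (fun i => s1`_i * G1`_i)).
rewrite -(big_mkord xpredT (fun i => s2`_i * G2`_i)).
rewrite size_cat (@big_cat_nat _ _ _ (size G1)) ?leq_addr //=.
congr (_ + _); first by apply: eq_big_nat => i /andP [_ hi]; rewrite !nth_cat size_s1 hi.
rewrite (big_addn 0 _ (size G1)) addKn.
by apply: eq_big_nat => i _; rewrite !nth_cat size_s1 ltnNge leq_addl /= addnK.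
Qed.

Lemma zero_weighted_sum G : \sum_(i < size G) (nseq (size G) (0 : P))`_i * G`_i = 0.
Proof. by rewrite big1 // => i _; rewrite nth_nseq if_same mul0r. Qed.

Lemma inQt_catl t G1 G2 p : inQt t G1 p -> inQt t (G1 ++ G2) p.
Proof.
case=> s0 [s [sos_s0 hs0 size_s hs ->]].
exists s0, (s ++ nseq (size G2) 0); split => //.
- by rewrite !size_cat size_nseq size_s.
- move=> i; rewrite size_cat !nth_cat size_s; case: ifP => hi _; first exact: hs.
  by rewrite nth_nseq if_same; split; [exact: sos0 | left].
- by rewrite weighted_sum_cat // zero_weighted_sum addr0.
Qed.

Lemma inQt_catr t G1 G2 p : inQt t G2 p -> inQt t (G1 ++ G2) p.
Proof.
case=> s0 [s [sos_s0 hs0 size_s hs ->]].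
exists s0, (nseq (size G1) 0 ++ s); split => //.
- by rewrite !size_cat size_nseq size_s.
- move=> i; rewrite size_cat !nth_cat size_nseq; case: ifP => hi hi'.
    by rewrite nth_nseq if_same; split; [exact: sos0 | left].
  by apply: hs; lia.
- by rewrite weighted_sum_cat ?size_nseq // zero_weighted_sum add0r.
Qed.

Lemma inL_catl t G1 G2 sigma : inL t (G1 ++ G2) sigma -> inL t G1 sigma.
Proof. by case=> L pos; split => // p /(inQt_catl G2); apply: pos. Qed.

Lemma inL_catr t G1 G2 sigma : inL t (G1 ++ G2) sigma -> inL t G2 sigma.
Proof. by case=> L pos; split => // p /(inQt_catr G1); apply: pos. Qed.

Definition weighted_combo t H B := exists s : seq P, [/\ size s = size H,
  forall i, (i < size H)%N -> s`_i = 0 \/ (msize s`_i + msize H`_i <= t.+2)%N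
  & B = \sum_(i < size H) s`_i * H`_i].

Lemma weighted_combo_deg t H B : weighted_combo t H B -> deg_le B t.
Proof. by case=> s [_ hs ->]; apply: deg_le_sum => i; apply: weighted_term_deg; apply: hs. Qed.

Lemma inQt_cat_split t G H p : inQt t (G ++ H) p ->
  exists A B, [/\ p = A + B, inQt t G A & weighted_combo t H B].
Proof.
case=> s0 [s [sos_s0 hs0 size_s hs ->]].
have size_take_s : size (take (size G) s) = size G.
  by rewrite size_take size_s size_cat; case: ltnP => //; lia.
have size_drop_s : size (drop (size G) s) = size H.
  by rewrite size_drop size_s size_cat addKn.
rewrite -(cat_take_drop (size G) s) weighted_sum_cat // addrA.
do 2 eexists; split; first reflexivity.
  exists s0, (take (size G) s); split => // i hi.
  by have := hs i; rewrite size_cat nth_cat hi nth_take //; apply; apply: ltn_addr.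
exists (drop (size G) s); split => // i hi.
have := hs (size G + i)%N; rewrite size_cat ltn_add2l nth_drop nth_cat.
have -> : (size G + i < size G)%N = false by lia.
by rewrite addKn => /(_ hi) [].
Qed.

Lemma weighted_combo_annihilated t H B sigma : lin_on t sigma ->
  (forall x, x \in H -> annihilates t sigma x) -> weighted_combo t H B -> sigma B = 0.
Proof.
move=> L annH [s [_ hs ->]].
rewrite (lin_sum L); last by move=> i; apply: weighted_term_deg; apply: hs.
apply: big1 => i _; have [->|hi] := hs i (ltn_ord i); first by rewrite mul0r (lin0 L).
by apply: annH; [apply: mem_nth | apply: leq_trans (leq_addr _ _) hi].
Qed.

Lemma inL_extend d k G H sigma : (d <= k)%N -> inL k G sigma ->
  (forall x, x \in H -> annihilates d sigma x) -> inL d (G ++ H) sigma.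
Proof.
move=> dk hL annH; have hLd := inL_mono dk hL; split => [|p]; first exact: hLd.1.
case/inQt_cat_split=> A [B [-> hA hB]].
rewrite (linD hLd.1 (inQt_deg hA) (weighted_combo_deg hB)).
by rewrite (weighted_combo_annihilated hLd.1 annH hB) addr0; apply: hLd.2.
Qed.

Lemma annihilates_pm d sigma (h : seq P) :
  (forall i, (i < size h)%N -> annihilates d sigma h`_i) ->
  forall x, x \in pm h -> annihilates d sigma x.
Proof.
move=> annh x /flatten_mapP [y /(nthP 0) [i hi <-]]; rewrite !inE.
case/orP=> /eqP -> u hu; first exact: annh.
by rewrite mulrN -mulNr; apply: annh; rewrite ?deg_leN.
Qed.

Lemma ideal_sub_nth (h : seq P) (J : P -> Prop) i :
  ideal_sub h J -> (i < size h)%N -> J h`_i.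
Proof.
move=> hJ hi; have := hJ [seq (j == i)%:R | j <- iota 0 (size h)].
rewrite (bigD1 (Ordinal hi)) //= big1 => [|j /negbTE ji].
  by rewrite (nth_map 0%N) ?size_iota // nth_iota // eqxx mul1r addr0.
rewrite (nth_map 0%N) ?size_iota // nth_iota // add0n.
by rewrite (_ : (val j == i) = false) ?mul0r //; apply: contraFF ji => /eqP/val_inj ->.
Qed.

End TruncatedModules.

Lemma uniform_bound (N d : nat) (Q : nat -> nat -> Prop) :
  (forall k k' i, (k <= k')%N -> Q k i -> Q k' i) ->
  (forall i, (i < N)%N -> exists k, Q k i) ->
  exists k, (d <= k)%N /\ forall i, (i < N)%N -> Q k i.
Proof.
move=> Qmono; elim: N => [|N IH] hQ; first by exists d.
have [k1 [dk1 Qk1]] : exists k, (d <= k)%N /\ forall i, (i < N)%N -> Q k i.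
  by apply: IH => i hi; apply: hQ; apply: ltnW.
have [k2 Qk2] := hQ N (ltnSn N).
exists (maxn k1 k2); split; first by rewrite leq_max dk1.
move=> i; rewrite ltnS leq_eqVlt => /orP [/eqP ->|hi].
  by apply: Qmono Qk2; rewrite leq_maxr.
by apply: Qmono (Qk1 i hi); rewrite leq_maxl.
Qed.

Theorem mainTheorem13 (R : realType) (n : nat) (g h : seq {mpoly R[n]}) (d : nat) :
  ideal_sub h (real_radical (suppQ g)) ->
  (forall i, (i < size h)%N -> deg_le h`_i d) ->
  exists k : nat, (d <= k)%N /\
    (forall sigma : {mpoly R[n]} -> R,
        inL k g sigma -> inL d (g ++ pm h) sigma) /\
    (forall sigma : {mpoly R[n]} -> R,
        inL d (g ++ pm h) sigma -> inL d g sigma) /\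
    (forall sigma : {mpoly R[n]} -> R,
        inL k g sigma -> inL d (pm h) sigma).
Proof.
move=> h_in_J deg_h.
pose annihilated k i := forall sigma, inL k g sigma -> annihilates d sigma h`_i.
have [k [dk annk]] : exists k, (d <= k)%N /\
    forall i, (i < size h)%N -> annihilated k i.
  apply: uniform_bound => [k k' i kk' annk sigma /(inL_mono kk')|i hi].
    exact: annk.
  exact: real_radical_annihilated (ideal_sub_nth h_in_J hi) (deg_h i hi).
have extend sigma : inL k g sigma -> inL d (g ++ pm h) sigma.
  move=> hL; apply: (inL_extend dk hL).
  by apply: annihilates_pm => i hi; apply: annk.
exists k; split=> //; split; first exact: extend.
split=> sigma; first exact: inL_catl.
by move/extend; apply: inL_catr.
Qed.
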